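(* For any probability distribution $G$ with $\mathrm{supp}(G)\subseteq[0,K]$ for some $K\ge1$, there exists a universal constant $C>0$ such that $\sum_{y=0}^\infty\sqrt{f_G(y)}\le C\sqrt K$.
   Context: $f_G(y)=\int\frac{\theta^ye^{-\theta}}{y!}G(d\theta)$ for $y\in\{0,1,\dots\}$ (the Poisson mixture pmf). *)

From HB Require Import structures.
From mathcomp Require Import all_boot all_order all_algebra.
From mathcomp Require Import all_classical all_reals all_analysis.
Set Implicit Arguments. Unset Strict Implicit. Unset Printing Implicit Defensive.
Import Order.TTheory GRing.Theory Num.Theory.
Local Open Scope classical_set_scope.
Local Open Scope ring_scope.

Definition poisson_mix (R : realType) (G : probability (measurableTypeR R) R)
  (y : nat) : \bar R :=
  (\int[G]_(t in [set: R]) ((t ^+ y * expR (- t) / (y`!)%:R)%:E))%E.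

(* The values f(y) of the Poisson mixture sum to at most 1 and, since G lives
   on [0, K], satisfy f(y+1) <= K/(y+1) f(y).  Beyond
   N = floor(4K) the ratio is at most 1/4, so the square roots decay at least
   geometrically with ratio 1/2 and the tail from N is at most 2 sqrt(f N).
   By Cauchy-Schwarz the first N+1 square roots sum to at most sqrt(N+1),
   which is O(sqrt K). *)

From mathcomp Require Import all_boot all_order all_algebra.
From mathcomp Require Import all_classical all_reals all_analysis.
From mathcomp Require Import ring lra measurable_realfun.
Set Implicit Arguments. Unset Strict Implicit. Unset Printing Implicit Defensive.
Import Order.TTheory GRing.Theory Num.Theory.
Local Open Scope classical_set_scope.
Local Open Scope ring_scope.

Section poisson_weight.
Variable R : realType.

Definition poisson_weight (y : nat) (t : R) : R := t ^+ y * expR (- t) / y`!%:R.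

Lemma measurable_poisson_weight y : measurable_fun setT (poisson_weight y).
Proof.
apply: measurable_funM => //; apply: measurable_funM; first exact: exprn_measurable.
by apply: measurableT_comp; [exact: measurable_expR | exact: measurable_funN].
Qed.

Lemma poisson_weight_ge0 y t : 0 <= t -> 0 <= poisson_weight y t.
Proof. by move=> t0; rewrite !mulr_ge0 ?exprn_ge0 ?expR_ge0. Qed.

Lemma sum_poisson_weight_le1 n t :
  0 <= t -> \sum_(0 <= y < n) poisson_weight y t <= 1.
Proof.
move=> t0.
have -> : \sum_(0 <= y < n) poisson_weight y t = expR (- t) * series (exp_coeff t) n.
  rewrite /series /= big_distrr /=; apply: eq_bigr => i _.
  by rewrite /poisson_weight /exp_coeff /= mulrCA mulrA.
rewrite -(expRxMexpNx_1 t) mulrC ler_wpM2r ?expR_ge0 //.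
apply: nondecreasing_cvgn_le; last exact: is_cvg_series_exp_coeff.
by apply: nondecreasing_series => k _ _; exact: exp_coeff_ge0.
Qed.

Lemma poisson_weightS y t : poisson_weight y.+1 t = t / y.+1%:R * poisson_weight y t.
Proof.
rewrite /poisson_weight factS natrM exprS invfM; field.
by rewrite addrC natr1 !pnatr_eq0 -lt0n fact_gt0.
Qed.

End poisson_weight.

Section conull_integral.
Local Open Scope ereal_scope.
Context d (T : measurableType d) (R : realType) (mu : {measure set T -> \bar R}).

Lemma integral_setT_conull (D : set T) (f : T -> \bar R) :
  measurable D -> measurable_fun setT f -> mu (~` D) = 0 ->
  \int[mu]_x f x = \int[mu]_(x in D) f x.
Proof.
move=> mD mf muDC; rewrite [RHS]integral_mkcond.
apply: (ae_eq_integral (f \_ D)) => //.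
- by apply/(measurable_restrictT _ mD)/(measurable_funS _ _ mf).
- exists (~` D); split => //; first exact: measurableC.
  by apply: subsetC => x /= Dx _; rewrite patchE mem_set.
Qed.
End conull_integral.

Section poisson_mixture.
Local Open Scope ereal_scope.
Variables (R : realType) (K : R) (G : probability (measurableTypeR R) R).
Hypothesis K_ge0 : (0 <= K)%R.
Hypothesis G_supp : G (~` `[0%R, K]%classic) = 0.

Let D := `[0%R, K]%classic : set R.

Let mD : measurable D. Proof. exact: measurable_itv. Qed.

Let D_itv t : D t -> (0 <= t <= K)%R.
Proof. by rewrite /D /= in_itv. Qed.

Let measurable_weight y : measurable_fun D (fun t => (poisson_weight y t)%:E).
Proof.
by apply/measurable_EFinP/measurable_funTS; exact: measurable_poisson_weight.
Qed.

Let weight_ge0 y t : D t -> 0 <= (poisson_weight y t)%:E.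
Proof. by move=> /D_itv/andP[t0 _]; rewrite lee_fin poisson_weight_ge0. Qed.

Lemma poisson_mixE y :
  poisson_mix G y = \int[G]_(t in D) (poisson_weight y t)%:E.
Proof.
rewrite /poisson_mix; apply: (integral_setT_conull (mu := G)) => //.
by apply/measurable_EFinP; exact: measurable_poisson_weight.
Qed.

Lemma poisson_mix_ge0 y : 0 <= poisson_mix G y.
Proof. by rewrite poisson_mixE; apply: integral_ge0 => t; exact: weight_ge0. Qed.

Lemma sum_poisson_mix_le1 n : \sum_(0 <= y < n) poisson_mix G y <= 1.
Proof.
under eq_bigr do rewrite poisson_mixE.
rewrite -ge0_integral_sum //; apply: (@le_trans _ _ (\int[G]_(t in D) 1)).
  apply: ge0_le_integral => //.
  - by move=> t Dt; apply: sume_ge0 => y _; exact: weight_ge0.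
  - by apply: emeasurable_sum => y; exact: measurable_weight.
  - by move=> t /D_itv/andP[t0 _]; rewrite sumEFin lee_fin sum_poisson_weight_le1.
by rewrite integral_cst // mul1e probability_le1.
Qed.

Lemma poisson_mixS y :
  poisson_mix G y.+1 <= (K / y.+1%:R)%:E * poisson_mix G y.
Proof.
rewrite !poisson_mixE -ge0_integralZl_EFin ?divr_ge0 //; last 2 first.
- exact: weight_ge0.
- exact: measurable_weight.
apply: ge0_le_integral => //.
- exact: weight_ge0.
- exact: measurable_weight.
- by apply: measurable_funeM; exact: measurable_weight.
move=> t /D_itv/andP[t0 tK].
by rewrite poisson_weightS -EFinM lee_fin !ler_wpM2r ?invr_ge0 ?poisson_weight_ge0.
Qed.

Lemma fin_num_poisson_mix y : poisson_mix G y \is a fin_num.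
Proof.
rewrite ge0_fin_numE ?poisson_mix_ge0 //; apply: le_lt_trans (ltry 1).
apply: le_trans (sum_poisson_mix_le1 y.+1); rewrite big_nat_recr //= leeDr //.
by apply: sume_ge0 => k _; exact: poisson_mix_ge0.
Qed.

End poisson_mixture.

Section sqrt_series.
Variable R : realType.
Implicit Types (f g : nat -> R) (n N : nat).

Lemma sqrtr_le_mul_sqrtr (c a b : R) : 0 <= c -> 0 <= b ->
  a <= c ^+ 2 * b -> Num.sqrt a <= c * Num.sqrt b.
Proof.
move=> c0 b0 abc.
by rewrite -(ger0_norm c0) -sqrtr_sqr -sqrtrM ?sqr_ge0 // ler_wsqrtr.
Qed.

Lemma sum_sqrt_le_sqrt_card f n : (forall i, 0 <= f i) ->
  \sum_(0 <= i < n) f i <= 1 -> \sum_(0 <= i < n) Num.sqrt (f i) <= Num.sqrt n%:R.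
Proof.
move=> f_ge0 sum_le1.
case: n sum_le1 => [|n] sum_le1; first by rewrite big_geq // sqrtr0.
set s := Num.sqrt n.+1%:R.
have s_gt0 : 0 < s by rewrite sqrtr_gt0 ltr0n.
have s2 : s ^+ 2 = n.+1%:R by rewrite sqr_sqrtr.
(* AM-GM termwise: [2 s a <= s^2 a^2 + 1] *)
have amgm : 2 * s * \sum_(0 <= i < n.+1) Num.sqrt (f i)
    <= s ^+ 2 * \sum_(0 <= i < n.+1) f i + n.+1%:R.
  rewrite !mulr_sumr -[n.+1 in X in _ <= _ + X]subn0 -sumr_const_nat -big_split.
  apply: ler_sum_nat => i _ /=.
  have := sqr_sqrtr (f_ge0 i); have := sqrtr_ge0 (f i).
  set a := Num.sqrt (f i) => a0 <-; have := sqr_ge0 (a * s - 1); nra.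
rewrite s2 in amgm; nra.
Qed.

Lemma sum_halving_le g N n : (forall m, 0 <= g m) ->
  (forall m, (N <= m)%N -> 2 * g m.+1 <= g m) ->
  \sum_(N <= m < N + n) g m <= 2 * g N.
Proof.
move=> g_ge0 g_half.
suff inv : \sum_(N <= m < N + n) g m + 2 * g (N + n)%N <= 2 * g N.
  by apply: le_trans inv; rewrite lerDl mulr_ge0.
elim: n => [|n IH]; first by rewrite addn0 big_geq // add0r.
rewrite addnS big_nat_recr ?leq_addr //= -addrA; apply: le_trans IH.
have := g_half _ (leq_addr n N); rewrite lerD2l; lra.
Qed.

Lemma sum_sqrt_le_of_ratio (K : R) f : 1 <= K -> (forall y, 0 <= f y) ->
  (forall n, \sum_(0 <= y < n) f y <= 1) ->
  (forall y, f y.+1 <= K / y.+1%:R * f y) ->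
  forall n, \sum_(0 <= y < n) Num.sqrt (f y) <= 4 * Num.sqrt K.
Proof.
move=> K_ge1 f_ge0 sum_le1 f_ratio n.
have K_ge0 : 0 <= K by apply: le_trans K_ge1.
pose N := Num.truncn (4 * K).
have /andP[N_le N_gt] : N%:R <= 4 * K < N.+1%:R by rewrite truncn_itv ?mulr_ge0.
have sqrt_half m : (N <= m)%N -> 2 * Num.sqrt (f m.+1) <= Num.sqrt (f m).
  move=> le_Nm.
  have : Num.sqrt (f m.+1) <= 2^-1 * Num.sqrt (f m); last by lra.
  apply: sqrtr_le_mul_sqrtr => //; apply: le_trans (f_ratio m) _.
  apply: ler_wpM2r => //; rewrite ler_pdivrMr ?ltr0n //.
  have : 4 * K <= m.+1%:R by rewrite (le_trans (ltW N_gt)) ?ler_nat.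
  rewrite expr2; lra.
have fN_le1 : f N <= 1.
  apply: le_trans (sum_le1 N.+1); rewrite big_nat_recr //= lerDr.
  by apply: sumr_ge0 => i _.
have head := sum_sqrt_le_sqrt_card f_ge0 (sum_le1 N.+1).
have tail := sum_halving_le n (fun y => sqrtr_ge0 (f y)) sqrt_half.
have prefix : \sum_(0 <= y < n) Num.sqrt (f y) <= \sum_(0 <= y < N + n) Num.sqrt (f y).
  rewrite (big_cat_nat (leq0n n) (leq_addl N n)) /= lerDl.
  by apply: sumr_ge0 => y _; exact: sqrtr_ge0.
have sqrtN : Num.sqrt N.+1%:R <= 3 * Num.sqrt K.
  by apply: sqrtr_le_mul_sqrtr => //; rewrite -natr1 expr2; lra.
have sqrtK_ge1 : 1 <= Num.sqrt K by rewrite -sqrtr1 ler_wsqrtr.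
have sqrt_fN : Num.sqrt (f N) <= 1 by rewrite -sqrtr1 ler_wsqrtr.
rewrite (big_cat_nat (leq0n N) (leq_addr n N)) /= in prefix.
rewrite big_nat_recr //= in head.
lra.
Qed.
End sqrt_series.

Theorem lemma7 (R : realType) :
  exists C : R, 0 < C /\
    forall (K : R) (G : probability (measurableTypeR R) R),
      1 <= K ->
      G (~` `[0, K]%classic) = 0%E ->
      (\sum_(0 <= y <oo) ((Num.sqrt (fine (poisson_mix G y)))%:E)
         <= (C * Num.sqrt K)%:E)%E.
Proof.
exists 4; split => // K G K_ge1 G_supp.
have K_ge0 : 0 <= K := le_trans ler01 K_ge1.
pose f y := fine (poisson_mix G y).
have mixE y : poisson_mix G y = (f y)%:E.
  by rewrite fineK // (fin_num_poisson_mix G_supp).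
have f_ge0 y : 0 <= f y by rewrite -lee_fin -mixE (poisson_mix_ge0 G_supp).
have sum_le1 n : \sum_(0 <= y < n) f y <= 1.
  rewrite -lee_fin -sumEFin; under eq_bigr do rewrite -mixE.
  exact: (sum_poisson_mix_le1 G_supp).
have ratio y : f y.+1 <= K / y.+1%:R * f y.
  by rewrite -lee_fin EFinM -!mixE (poisson_mixS K_ge0 G_supp).
apply: lime_le; first by apply: is_cvg_nneseries => y _ _; rewrite lee_fin sqrtr_ge0.
by apply: nearW => n; rewrite sumEFin lee_fin sum_sqrt_le_of_ratio.
Qed.
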